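(* Let $N\in\mathbb{N}$, $\Lambda\subseteq P_N$, $N(\Lambda):=N-|\Lambda|$. (i) For any $\lambda\subseteq P_{N(\Lambda)}$, $\pi_\lambda\circ\pi_\Lambda=\pi_{\varphi(\lambda)\cup\Lambda}$, where $\varphi$ is the unique strictly increasing bijection $P_{N(\Lambda)}\to P_N\smallsetminus\Lambda$. (ii) $\pi_\Lambda:\mathbb{D}_N\to\mathbb{D}_{N(\Lambda)}$ is surjective, and its restriction to $\mathcal{D}_N$ induces a continuous surjective map $\pi_\Lambda:\mathcal{D}_N\to\mathcal{D}_{N(\Lambda)}$ that sends $\{(w,a,\theta)\in\mathcal{D}_N: a^{-1}[0]=\Lambda\}$ onto $\mathcal{D}^\circ_{N(\Lambda)}$. (iii) The function $\mathrm{Re}[\pi]:\mathbb{D}_N\to\mathbb{R}$, $\mathrm{Re}[\pi](w,a,\theta):=\mathrm{Re}(\pi(w,a,\theta))$, is continuous and surjective.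
   Context: $\mathbb{N}=\{0,1,\dots\}$, $P_N=\{1,\dots,N\}$ ($P_0=\emptyset$); vectors $v\in\mathbb{C}^N$ are functions on $P_N$, $v^{-1}[S]=\{\ell:v_\ell\in S\}$; $\mathrm{Tr}(v,\Lambda):=\sum_{\ell\in\Lambda}v_\ell$. $\mathcal{C}:=\{z:\mathrm{Re}(z)>0\text{ or }z\in i\mathbb{R}_{>0}\}$, $\mathcal{C}^\circ$ the open right half-plane, $\mathbb{R}^*=\mathbb{R}\smallsetminus\{0\}$. For $N\ge1$: $\mathbb{D}_N:=\{(w,a,\theta)\in\mathbb{C}\times\mathbb{C}^N\times\mathbb{R}^N:a^{-1}[0]\subseteq\theta^{-1}[\mathbb{R}\smallsetminus\mathbb{Z}]\}$, $\pi(w,a,\theta):=w-\mathrm{Tr}(a,a^{-1}[-\mathcal{C}])$, $\mathcal{D}_N:=\{(w,a,\theta)\in\mathbb{D}_N:\pi(w,a,\theta)\in\mathcal{C}^\circ,\ a\in(\mathbb{C}\smallsetminus i\mathbb{R}^* )^N\}$, and $\mathcal{D}_N^\circ$ is its interior. For $N=0$: $\mathbb{D}_0:=\mathbb{C}$, $\mathcal{D}_0:=\{w:\mathrm{Re}(w)>0\}$ (open). Projections $\pi_\Lambda=\pi_{\Lambda,N}:\mathbb{D}_N\to\mathbb{D}_{N(\Lambda)}$: if $\Lambda=\emptyset$, the identity; if $\Lambda=P_N\ne\emptyset$, $\pi_\Lambda=\pi$; if $\Lambda$ is a nonempty proper subset, $\pi_\Lambda(w,a,\theta):=(w-\mathrm{Tr}(a,\Lambda\cap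 a^{-1}[-\mathcal{C}]),\hat a_\Lambda,\hat\theta_\Lambda)$, where $\hat v_\Lambda:=v\circ\varphi\in\mathbb{C}^{N(\Lambda)}$ with $\varphi$ the strictly increasing bijection $P_{N(\Lambda)}\to P_N\smallsetminus\Lambda$. *)

From HB Require Import structures.
From mathcomp Require Import all_boot all_order all_algebra.
From mathcomp Require Import all_classical all_reals all_analysis.
From mathcomp Require Import complex.
Import numFieldNormedType.Exports.
Import Order.TTheory GRing.Theory Num.Theory.

Set Implicit Arguments.
Unset Strict Implicit.
Unset Printing Implicit Defensive.

Local Open Scope ring_scope.
Local Open Scope classical_set_scope.

(* The (Euclidean) metric topology of C = R[i], induced by its norm. *)
HB.instance Definition _ (R : rcfType) :=
  PseudoPointedMetric.copy R[i] (R[i] : numFieldType)^o.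

Lemma card_setC_ord (N : nat) (L : {set 'I_N}) : #|~: L| = (N - #|L|)%N.
Proof. move: (cardsC L); rewrite card_ord; move: #|~: L| #|L| => k m <-; by rewrite addKn. Qed.

(* phi : P_{N(L)} -> P_N \ L, the strictly increasing bijection:
   the j-th element (in increasing order) of the complement of L. *)
Definition phi (N : nat) (L : {set 'I_N}) (j : 'I_(N - #|L|)) : 'I_N :=
  enum_val (cast_ord (esym (card_setC_ord L)) j).

Arguments phi {N} L j.

Definition hatv (T : Type) (N : nat) (L : {set 'I_N}) (v : 'rV[T]_N)
  : 'rV[T]_(N - #|L|) := \row_j v ord0 (phi L j).

Arguments hatv {T N} L v.

Section Defs.
Variable R : realType.
Local Notation C := (R[i]).

(* The ambient space C x C^N x R^N (vectors in C^N, R^N are row vectors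
   indexed by 'I_N, i.e. index l in P_N corresponds to ordinal l-1). *)
Definition Dom (N : nat) := (C * 'rV[C]_N * 'rV[R]_N)%type.

Definition Ccone (z : C) : Prop :=
  0 < complex.Re z \/ (complex.Re z = 0 /\ 0 < complex.Im z).
Definition in_mCcone (z : C) : Prop := Ccone (- z).
Definition in_iRstar (z : C) : Prop := complex.Re z = 0 /\ complex.Im z != 0.
Definition in_Copen (z : C) : Prop := 0 < complex.Re z.
Definition is_integer (t : R) : Prop := exists k : int, t = k%:~R.

(* \mathbb{D}_N  (for N = 0 this is C x C^0 x R^0, identified with C) *)
#[local] Unset Implicit Arguments.
Definition bbD (N : nat) : set (Dom N) :=
  [set x : Dom N | forall l : 'I_N, x.1.2 ord0 l = 0 -> ~ is_integer (x.2 ord0 l)].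

Definition pi_full (N : nat) (x : Dom N) : C :=
  x.1.1 - \sum_(l < N | `[< in_mCcone (x.1.2 ord0 l) >]) x.1.2 ord0 l.

Definition calD (N : nat) : set (Dom N) :=
  [set x : Dom N | bbD N x /\ in_Copen (pi_full N x) /\
           forall l : 'I_N, ~ in_iRstar (x.1.2 ord0 l)].

Definition calD_int (N : nat) : set (Dom N) := interior (calD N).

(* pi_L : D_N -> D_{N(L)}, given uniformly (covers L = empty, L = P_N
   with the identification C x C^0 x R^0 = C, and proper subsets). *)
Definition projL (N : nat) (L : {set 'I_N}) (x : Dom N) : Dom (N - #|L|) :=
  (x.1.1 - \sum_(l < N | (l \in L) && `[< in_mCcone (x.1.2 ord0 l) >])
             x.1.2 ord0 l,
   hatv L x.1.2, hatv L x.2).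

End Defs.

Arguments projL {R N} L x.

(* pi_L deletes the coordinates indexed by L and moves those of the deleted a_l
   lying in -C into w; as phi L enumerates the complement of L increasingly,
   deleting lam after L deletes phi L @: lam :|: L, and pi (pi_L x) = pi x.
   Right inverses of pi_L pad a point with a_l = d, theta_l = t on L, where
   d is not in -C, so nothing moves into w: d = 1 in general, and d = 0,
   t = 1/2 to reach the interior of D, which is exactly the part of D where all
   a_l are nonzero (all defining conditions are then open, while a zero entry
   can be pushed into iR^* ).  Writing Tr(a, a^-1[-C]) = sum_l a_l 1_{-C}(a_l),
   continuity follows since z 1_{-C}(z) is continuous off iR^*, and
   Re pi(w, a, theta) = Re w - sum_l min(Re a_l, 0) is continuous everywhere. *)

From HB Require Import structures.
From mathcomp Require Import all_boot all_order all_algebra.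
From mathcomp Require Import all_classical all_reals all_analysis.
From mathcomp Require Import complex.
Import numFieldNormedType.Exports.
Import Order.TTheory GRing.Theory Num.Theory.

Set Implicit Arguments.
Unset Strict Implicit.
Unset Printing Implicit Defensive.

Local Open Scope ring_scope.
Local Open Scope classical_set_scope.

Lemma sorted_enum_set (n : nat) (A : {set 'I_n}) : sorted <%O (enum A).
Proof.
rewrite /enum_mem -enumT; apply: lt_sorted_filter.
by have := iota_ltn_sorted 0 n; rewrite -val_enum_ord sorted_map.
Qed.

Lemma phiE (N : nat) (L : {set 'I_N}) x0 i : phi L i = nth x0 (enum (~: L)) i.
Proof. by rewrite /phi (enum_val_nth x0). Qed.

Section Phi.
Variables (N : nat) (L : {set 'I_N}).

Lemma phi_inj : injective (phi L).
Proof. by move=> i j /enum_val_inj /cast_ord_inj. Qed.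

Lemma phi_notin i : phi L i \notin L.
Proof. by have := enum_valP (cast_ord (esym (card_setC_ord L)) i); rewrite inE. Qed.

Lemma phi_surj k : k \notin L -> exists i, phi L i = k.
Proof.
move=> kL; have kC : k \in ~: L by rewrite inE.
exists (cast_ord (card_setC_ord L) (enum_rank_in kC k)).
by rewrite /phi cast_ordK enum_rankK_in.
Qed.

Lemma phi_lt : {homo phi L : i j / (i < j)%O}.
Proof.
move=> i j ij; rewrite (phiE (phi L i) i) (phiE (phi L i) j).
have sizeC : size (enum (~: L)) = (N - #|L|)%N by rewrite -cardE card_setC_ord.
by rewrite lt_sorted_ltn_nth ?sorted_enum_set ?inE ?sizeC.
Qed.

Lemma map_phi_enum (lam : {set 'I_(N - #|L|)}) :
  map (phi L) (enum (~: lam)) = enum (~: (phi L @: lam :|: L)).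
Proof.
apply: lt_sorted_eq; first exact: homo_sorted phi_lt _ (sorted_enum_set _).
  exact: sorted_enum_set.
move=> k; rewrite mem_enum !inE negb_or; apply/mapP/andP.
  move=> [j]; rewrite mem_enum inE => jNlam ->.
  by rewrite (mem_imset _ _ phi_inj) jNlam phi_notin.
move=> [kNim /phi_surj [j jk]]; exists j => //.
by rewrite mem_enum inE -(mem_imset _ _ phi_inj) jk.
Qed.

Lemma card_phi_setU (lam : {set 'I_(N - #|L|)}) :
  (N - #|L| - #|lam| = N - #|phi L @: lam :|: L|)%N.
Proof. by have := congr1 size (map_phi_enum lam); rewrite size_map -!cardE !card_setC_ord. Qed.

Lemma phi_comp (lam : {set 'I_(N - #|L|)}) j :
  phi L (phi lam j) = phi (phi L @: lam :|: L) (cast_ord (card_phi_setU lam) j).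
Proof.
rewrite [RHS](phiE (phi L (phi lam j))) -map_phi_enum (nth_map (phi lam j)) -?phiE //.
by rewrite -cardE card_setC_ord; exact: ltn_ord j.
Qed.

Lemma big_setU_imset_phi (V : nmodType) (lam : {set 'I_(N - #|L|)}) (F : 'I_N -> V) :
  \sum_(l in phi L @: lam :|: L) F l = \sum_(j in lam) F (phi L j) + \sum_(l in L) F l.
Proof.
rewrite -(big_imset _ (in2W phi_inj)) -bigU /=.
  by apply: eq_bigl => l; rewrite !inE.
rewrite fintype.disjoint_subset; apply/fintype.subsetP => _ /imsetP[j _ ->].
by rewrite inE /= phi_notin.
Qed.

Lemma big_split_phi (V : nmodType) (F : 'I_N -> V) :
  \sum_(l < N) F l = \sum_(l in L) F l + \sum_(j < N - #|L|) F (phi L j).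
Proof.
rewrite (bigID (mem L)) /=; congr (_ + _).
rewrite -(big_imset _ (in2W phi_inj)) /=; apply: eq_bigl => l.
apply/idP/imsetP => [/phi_surj [j <-]|[j _ ->]]; last exact: phi_notin.
by exists j.
Qed.

End Phi.

Section Cone.
Variable R : realType.
Local Notation C := R[i].

Definition mCpart (z : C) : C := if `[< in_mCcone z >] then z else 0.

Lemma in_mCconeE (z : C) :
  in_mCcone z <-> complex.Re z < 0 \/ (complex.Re z = 0 /\ complex.Im z < 0).
Proof.
rewrite /in_mCcone /Ccone !raddfN /= !oppr_gt0.
split=> -[neg|[re0 im]]; [by left|right|by left|right]; split=> //.
  by rewrite -[LHS]opprK re0 oppr0.
by rewrite re0 oppr0.
Qed.

Lemma not_in_mCcone (z : C) : 0 <= complex.Re z -> 0 <= complex.Im z -> ~ in_mCcone z.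
Proof. by move=> re im /in_mCconeE [|[_]]; rewrite ltNge ?re ?im. Qed.

Lemma mCpart_id (z : C) : complex.Re z < 0 -> mCpart z = z.
Proof. by move=> neg; rewrite /mCpart asboolT // in_mCconeE; left. Qed.

Lemma mCpart_eq0 (z : C) : 0 < complex.Re z -> mCpart z = 0.
Proof.
move=> pos; rewrite /mCpart asboolF // in_mCconeE => -[neg|[re0 _]].
  by have := lt_trans pos neg; rewrite ltxx.
by rewrite re0 ltxx in pos.
Qed.

Lemma Re_mCpart (z : C) : complex.Re (mCpart z) = Num.min (complex.Re z) 0.
Proof.
have [neg|pos|re0] := ltgtP (complex.Re z) 0.
- by rewrite mCpart_id.
- by rewrite mCpart_eq0.
by rewrite /mCpart; case: asboolP.
Qed.

Lemma sum_mCpart (I : finType) (P : pred I) (F : I -> C) :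
  \sum_(i | P i && `[< in_mCcone (F i) >]) F i = \sum_(i | P i) mCpart (F i).
Proof. by rewrite big_mkcondr. Qed.

Lemma Re_pi_full n (x : Dom R n) :
  complex.Re (pi_full R n x) =
  complex.Re x.1.1 - \sum_(l < n) Num.min (complex.Re (x.1.2 ord0 l)) 0.
Proof.
rewrite /pi_full (sum_mCpart xpredT) raddfB raddf_sum /=.
by congr (_ - _); apply: eq_bigr => l _; rewrite Re_mCpart.
Qed.

Lemma pi_full_projL N (L : {set 'I_N}) (x : Dom R N) :
  pi_full R _ (projL L x) = pi_full R N x.
Proof.
rewrite /pi_full /projL /= !(sum_mCpart xpredT) sum_mCpart (big_split_phi L).
by rewrite opprD addrA; congr (_ - _); apply: eq_bigr => j _; rewrite mxE.
Qed.

End Cone.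

Section MatrixTopology.
Variables (T : topologicalType) (m n : nat).

Lemma cvg_mx_entrywise (U : Type) (F : set_system U) {FF : Filter F}
    (f : U -> 'M[T]_(m, n)) (M : 'M[T]_(m, n)) :
  (forall i j, (fun y => f y i j) @ F --> M i j) -> f @ F --> M.
Proof.
move=> fM A [P PM sPA]; apply: filterS sPA _.
by apply: filter_forall => i; apply: filter_forall => j; exact: fM (PM i j).
Qed.

Lemma mxentry_continuous i j : continuous (fun M : 'M[T]_(m, n) => M i j).
Proof.
move=> M A MA; exists (fun i' j' => if (i' == i) && (j' == j) then A else setT).
  by move=> i' j'; case: eqP => [->|_]; case: eqP => [->|_] //=; exact: filterT.
by move=> M' /(_ i j); rewrite !eqxx.
Qed.

End MatrixTopology.

Lemma cvg_sum (V : TopologicalNmodule.type) (T I : Type)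
    (F : set_system T) {FF : Filter F} (r : seq I) (P : pred I)
    (f : I -> T -> V) (a : I -> V) :
  (forall i, P i -> f i @ F --> a i) ->
  (fun x => \sum_(i <- r | P i) f i x) @ F --> \sum_(i <- r | P i) a i.
Proof. by move=> fa; apply: cvg_big => //; exact: add_continuous. Qed.

Section Continuity.
Variable R : realType.
Local Notation C := R[i].

Lemma Re_continuous : continuous (@complex.Re R : C -> R).
Proof.
move=> z; apply/(@cvgrPdist_lt _ _ _ _ (nbhs_filter (z : C^o))) => e e0.
have : nbhs (z : C^o) (ball z (e%:C)%C) by apply: nbhsx_ballx; rewrite ltcR.
apply: filterS => y; rewrite /ball /= ltcE /= => /andP[_]; apply: le_lt_trans.
case: z y => a b [c d] /=.
by rewrite -sqrtr_sqr ler_wsqrtr // lerDl sqr_ge0.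
Qed.

Lemma w_continuous n : continuous (fun x : Dom R n => x.1.1).
Proof. by move=> x; apply: (continuous_comp (f := fst) (g := fst)); exact: cvg_fst. Qed.

Lemma a_continuous n l : continuous (fun x : Dom R n => x.1.2 ord0 l).
Proof.
move=> x; apply: (continuous_comp (f := fst) (g := fun y : C * 'rV_n => y.2 ord0 l)).
  exact: cvg_fst.
apply: (continuous_comp (f := snd) (g := fun v : 'rV[C]_n => v ord0 l)).
  exact: cvg_snd.
exact: mxentry_continuous.
Qed.

Lemma theta_continuous n l : continuous (fun x : Dom R n => x.2 ord0 l).
Proof.
move=> x; apply: (continuous_comp (f := snd) (g := fun v : 'rV[R]_n => v ord0 l)).
  exact: cvg_snd.
exact: mxentry_continuous.
Qed.

(* 1_{-C} jumps everywhere on iR; the factor z damps the jump only at z = 0. *)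
Lemma mCpart_continuous (z : C) : ~ in_iRstar z -> {for z, continuous (@mCpart R)}.
Proof.
move=> zNiR; have Re_z := @Re_continuous z.
have [neg|pos|re0] := ltgtP (complex.Re z) 0.
- rewrite /prop_for /continuous_at mCpart_id //.
  have near_id : {near z, id =1 @mCpart R}.
    by near=> y; rewrite /= mCpart_id //; near: y; exact: cvgr_lt Re_z _ neg.
  exact: cvg_trans (near_eq_cvg near_id) (@cvg_id _ (nbhs z)).
- rewrite /prop_for /continuous_at mCpart_eq0 //.
  apply: (@cvg_near_cst _ _ _ _ _ (nbhs_filter z)).
  near=> y; rewrite mCpart_eq0 //; near: y; exact: cvgr_gt Re_z _ pos.
have z0 : z = 0.
  case: z zNiR re0 {Re_z} => a b zNiR /= a0.
  apply/eqP; rewrite eq_complex /= a0 eqxx /=.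
  by apply: contra_notT zNiR => b0; split.
rewrite {}z0 /prop_for /continuous_at.
have -> : mCpart 0 = 0 :> C by rewrite /mCpart; case: asboolP.
apply/(@cvgrPdist_lt _ C^o _ _ (nbhs_filter (0 : C))) => e e0; near=> y.
by rewrite sub0r normrN /mCpart; case: asboolP => _; rewrite ?normr0 //.
Unshelve. all: by end_near.
Qed.

Lemma projL_continuous_at N (L : {set 'I_N}) (x : Dom R N) :
  (forall l, ~ in_iRstar (x.1.2 ord0 l)) -> {for x, continuous (projL L)}.
Proof.
move=> xNiR; rewrite /prop_for /continuous_at /projL.
under eq_fun do rewrite sum_mCpart.
have w_cvg :
    (fun y : Dom R N => y.1.1 - \sum_(l < N | l \in L) mCpart (y.1.2 ord0 l)) @ x
    --> x.1.1 - \sum_(l < N | l \in L) mCpart (x.1.2 ord0 l).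
  apply: (@cvgB _ C^o); first exact: w_continuous.
  apply: (@cvg_sum C^o) => l _.
  exact: continuous_comp (@a_continuous _ l x) (mCpart_continuous (xNiR l)).
have a_cvg : (fun y : Dom R N => hatv L y.1.2) @ x --> hatv L x.1.2.
  apply: cvg_mx_entrywise => i j; rewrite mxE.
  by under eq_fun do rewrite mxE; exact: a_continuous.
have theta_cvg : (fun y : Dom R N => hatv L y.2) @ x --> hatv L x.2.
  apply: cvg_mx_entrywise => i j; rewrite mxE.
  by under eq_fun do rewrite mxE; exact: theta_continuous.
by rewrite sum_mCpart; exact: cvg_pair (cvg_pair w_cvg a_cvg) theta_cvg.
Qed.

Lemma Re_pi_full_continuous n :
  continuous (fun x : Dom R n => complex.Re (pi_full R n x)).
Proof.
move=> x; under eq_fun do rewrite Re_pi_full.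
apply: cvgB; first exact: continuous_comp (@w_continuous _ x) (@Re_continuous _).
apply: cvg_sum => l _.
apply: (continuous_min (f := fun y : Dom R n => complex.Re (y.1.2 ord0 l)) (g := cst 0)).
  exact: continuous_comp (@a_continuous _ l x) (@Re_continuous _).
exact: cvg_cst.
Qed.

End Continuity.

Lemma eq_existT_Dom (R : realType) n1 n2 (e : n1 = n2) (x : Dom R n1) (y : Dom R n2) :
  x.1.1 = y.1.1 -> (forall i, x.1.2 ord0 i = y.1.2 ord0 (cast_ord e i)) ->
  (forall i, x.2 ord0 i = y.2 ord0 (cast_ord e i)) ->
  existT (Dom R) n1 x = existT (Dom R) n2 y.
Proof.
case: n2 / e y => -[[w a] t]; case: x => [[w' a'] t'] /= -> a'a t't.
have -> : a' = a by apply/rowP => i; rewrite a'a cast_ord_id.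
by have -> : t' = t by apply/rowP => i; rewrite t't cast_ord_id.
Qed.

Lemma projL_projL (R : realType) N (L : {set 'I_N}) (lam : {set 'I_(N - #|L|)})
    (x : Dom R N) :
  existT (Dom R) _ (projL lam (projL L x)) =
  existT (Dom R) _ (projL ((phi L @: lam) :|: L) x).
Proof.
apply: (@eq_existT_Dom R _ _ (card_phi_setU lam) (projL lam (projL L x))) => [|j|j];
  rewrite /projL /= ?mxE ?phi_comp //.
rewrite !sum_mCpart big_setU_imset_phi opprD addrA addrAC.
by congr (_ - _ - _); apply: eq_bigr => j _; rewrite mxE.
Qed.

Section Padding.
Variables (T : Type) (N : nat) (L : {set 'I_N}).

Definition padv (v : 'rV[T]_(N - #|L|)) (d : T) : 'rV[T]_N :=
  \row_l (if [pick j | phi L j == l] is Some j then v ord0 j else d).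

Lemma padv_phi v d j : padv v d ord0 (phi L j) = v ord0 j.
Proof. by rewrite mxE; case: pickP => [j' /eqP/phi_inj -> //|/(_ j)]; rewrite eqxx. Qed.

Lemma padv_in v d l : l \in L -> padv v d ord0 l = d.
Proof.
move=> lL; rewrite mxE; case: pickP => // j /eqP jl.
by move: (phi_notin j); rewrite jl lL.
Qed.

Lemma hatv_padv v d : hatv L (padv v d) = v.
Proof. by apply/rowP => j; rewrite mxE padv_phi. Qed.

End Padding.

Section Lift.
Variables (R : realType) (N : nat) (L : {set 'I_N}).
Local Notation C := R[i].

Definition lift_Dom (y : Dom R (N - #|L|)) (d : C) (t : R) : Dom R N :=
  (y.1.1, padv y.1.2 d, padv y.2 t).

Lemma projL_lift y d t : ~ in_mCcone d -> projL L (lift_Dom y d t) = y.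
Proof.
move=> dNm; case: y => [[w a] th]; rewrite /projL /= !hatv_padv big1 ?subr0 //.
by move=> l /andP[lL]; rewrite padv_in // => /asboolP.
Qed.

Lemma bbD_lift y d t :
  bbD R _ y -> (d = 0 -> ~ is_integer t) -> bbD R N (lift_Dom y d t).
Proof.
move=> yD dt l /=; case: (boolP (l \in L)) => [lL|/phi_surj [j <-]].
  by rewrite !padv_in.
by rewrite !padv_phi; exact: yD.
Qed.

Lemma calD_lift y d t : calD R _ y -> ~ in_mCcone d -> ~ in_iRstar d ->
  (d = 0 -> ~ is_integer t) -> calD R N (lift_Dom y d t).
Proof.
move=> [yD [ypi yNiR]] dNm dNiR dt; split; first exact: bbD_lift.
split; first by rewrite /in_Copen -(pi_full_projL L) projL_lift.
move=> l /=; case: (boolP (l \in L)) => [lL|/phi_surj [j <-]].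
  by rewrite padv_in.
by rewrite padv_phi.
Qed.

Lemma bbD_projL x : bbD R N x -> bbD R _ (projL L x).
Proof. by move=> xD j /=; rewrite !mxE; exact: xD. Qed.

Lemma calD_projL x : calD R N x -> calD R _ (projL L x).
Proof.
move=> [xD [xpi xNiR]]; split; first exact: bbD_projL.
by split=> [|j /=]; rewrite ?mxE // /in_Copen pi_full_projL.
Qed.

End Lift.

Lemma row_update_continuous (T : topologicalType) n (v : 'rV[T]_n) l :
  continuous (fun z : T => \row_k (if k == l then z else v ord0 k)).
Proof.
move=> z; apply: cvg_mx_entrywise => i k; rewrite mxE; under eq_fun do rewrite mxE.
by case: eqP => _; [exact: cvg_id | exact: cvg_cst].
Qed.

Section Interior.
Variable R : realType.
Local Notation C := R[i].

Lemma nbhs0_imaginary (U : set C) : nbhs (0 : C) U -> exists2 t : R, t != 0 & U (Complex 0 t).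
Proof.
move=> /(@nbhs_ballP _ C^o) [e e0 eU].
have : (0 : C) < e := e0; rewrite ltcE /= => /andP[/eqP Ie Re0].
exists (complex.Re e / 2); first by rewrite mulf_neq0 // ?gt_eqF // invr_eq0 pnatr_eq0.
apply: eU; rewrite -ball_normE /= sub0r normrN normc_def /= ltcE /= Ie eqxx /=.
rewrite expr0n /= add0r sqrtr_sqr gtr0_norm ?divr_gt0 //.
by rewrite ltr_pdivrMr // ltr_pMr // ltr1n.
Qed.

(* Near a point with a_l = 0 there are points with a_l in iR^*, outside calD. *)
Lemma calD_int_neq0 n (y : Dom R n) l : calD_int R n y -> y.1.2 ord0 l != 0.
Proof.
case: y => [[w a] th] /= yint; apply/negP => /eqP al0.
pose h z : Dom R n := (w, \row_k (if k == l then z else a ord0 k), th).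
have h0 : h 0 = (w, a, th).
  by congr (_, _, _); apply/rowP => k; rewrite mxE; case: eqP => // ->.
have h_cont : h @ (0 : C) --> h 0.
  exact: cvg_pair (cvg_pair (cvg_cst w) (@row_update_continuous _ _ a l 0)) (cvg_cst th).
have [t t0] : exists2 t : R, t != 0 & calD R n (h (Complex 0 t)).
  by apply: (@nbhs0_imaginary (h @^-1` calD R n)); apply: h_cont; rewrite h0.
by case=> _ [_ /(_ l)]; apply; rewrite /h /= mxE eqxx.
Qed.

Lemma calD_int_of_neq0 n (y : Dom R n) :
  calD R n y -> (forall l, y.1.2 ord0 l != 0) -> calD_int R n y.
Proof.
move=> [_ [ypi yNiR]] y_neq0.
have Re_neq0 l : complex.Re (y.1.2 ord0 l) != 0.
  move: (yNiR l) (y_neq0 l); case: (y.1.2 ord0 l) => a b /= aNiR.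
  apply: contraNneq => a0; rewrite eq_complex /= a0 eqxx /=.
  by apply/negPn/negP => b0; apply: aNiR.
have near_pi : \forall z \near y, 0 < complex.Re (pi_full R n z).
  exact: cvgr_gt (@Re_pi_full_continuous _ _ y) _ ypi.
have near_Re : \forall z \near y, forall l, complex.Re ((z : Dom R n).1.2 ord0 l) != 0.
  apply: (filter_forall (nbhs_filter y)) => l; apply: cvgr_neq0 (Re_neq0 l).
  exact: continuous_comp (@a_continuous _ _ l y) (@Re_continuous _ _).
apply: filterS2 near_pi near_Re => z zpi zRe; split; [|split] => // l.
  by move=> zl0; have := zRe l; rewrite zl0 raddf0 eqxx.
by move=> [zl0 _]; have := zRe l; rewrite zl0 eqxx.
Qed.

End Interior.

Lemma half_not_integer (R : realType) : ~ is_integer (2^-1 : R).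
Proof.
move=> [k k_half].
have k_gt0 : (0 : R) < k%:~R by rewrite -k_half invr_gt0 ltr0n.
have k_lt1 : k%:~R < (1 : R) by rewrite -k_half invf_lt1 ?ltr1n ?ltr0n.
by rewrite ltr0z in k_gt0; rewrite ltrz1 in k_lt1; case: k {k_half} k_gt0 k_lt1 => [[|n]|n].
Qed.

Section Projections.
Variables (R : realType) (N : nat) (L : {set 'I_N}).
Local Notation C := R[i].

Lemma projL_bbD : projL L @` bbD R N = bbD R (N - #|L|).
Proof.
apply/seteqP; split=> [_ [x xD <-]|y yD]; first exact: bbD_projL.
exists (lift_Dom y 1 0); last by apply: projL_lift; apply: not_in_mCcone; rewrite /= ?ler01.
by apply: bbD_lift => // /eqP; rewrite oner_eq0.
Qed.

Lemma projL_calD : projL L @` calD R N = calD R (N - #|L|).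
Proof.
apply/seteqP; split=> [_ [x xD <-]|y yD]; first exact: calD_projL.
exists (lift_Dom y 1 0); last by apply: projL_lift; apply: not_in_mCcone; rewrite /= ?ler01.
apply: calD_lift => //; first by apply: not_in_mCcone; rewrite /= ?ler01.
  by case=> /= /eqP; rewrite oner_eq0.
by move/eqP; rewrite oner_eq0.
Qed.

Lemma projL_zero_set :
  projL L @` [set x | calD R N x /\ forall l, x.1.2 ord0 l = 0 <-> l \in L]
  = calD_int R (N - #|L|).
Proof.
apply/seteqP; split=> [_ [x [xD x0L] <-]|y yint].
  apply: calD_int_of_neq0; first exact: calD_projL.
  by move=> j /=; rewrite mxE; apply/eqP => /x0L; rewrite (negbTE (phi_notin j)).
exists (lift_Dom y 0 2^-1); last by apply: projL_lift; apply: not_in_mCcone.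
split; last first.
  move=> l /=; split=> [|lL]; last exact: padv_in.
  by apply: contra_eqT => /phi_surj [j <-]; rewrite padv_phi calD_int_neq0.
apply: calD_lift.
- exact: nbhs_singleton.
- exact: not_in_mCcone.
- by case=> _ /=; rewrite eqxx.
- by move=> _; exact: half_not_integer.
Qed.

Lemma projL_continuous : {within calD R N, continuous (projL L)}.
Proof.
apply: continuous_in_subspaceT => x; rewrite inE => -[_ [_ xNiR]].
exact: projL_continuous_at.
Qed.

Lemma Re_pi_full_surj : (fun x => complex.Re (pi_full R N x)) @` bbD R N = setT.
Proof.
apply/seteqP; split=> // r _; exists ((r%:C)%C, const_mx 1, const_mx 0).
  by move=> l /=; rewrite mxE => /eqP; rewrite oner_eq0.
by rewrite Re_pi_full big1 ?subr0 // => l _; rewrite mxE min_r ?ler01.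
Qed.

End Projections.

Theorem proposition4 (R : realType) (N : nat) (L : {set 'I_N}) :
  (* (i) *)
  (forall (lam : {set 'I_(N - #|L|)}) (x : Dom R N), bbD R N x ->
     existT (@Dom R) _ (projL lam (projL L x)) =
     existT (@Dom R) _ (projL ((phi L @: lam) :|: L) x))
  (* (ii) *)
  /\ projL L @` bbD R N = bbD R (N - #|L|)
  /\ {within calD R N, continuous (projL L)}
  /\ projL L @` calD R N = calD R (N - #|L|)
  /\ projL L @` [set x | calD R N x /\
                   forall l : 'I_N, x.1.2 ord0 l = 0 <-> l \in L]
       = calD_int R (N - #|L|)
  (* (iii) *)
  /\ {within bbD R N, continuous (fun x : Dom R N => complex.Re (pi_full R N x))}
  /\ (fun x : Dom R N => complex.Re (pi_full R N x)) @` bbD R N = setT.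
Proof.
split; first by move=> lam x _; exact: projL_projL.
split; first exact: projL_bbD.
split; first exact: projL_continuous.
split; first exact: projL_calD.
split; first exact: projL_zero_set.
split; first exact: continuous_subspaceT (@Re_pi_full_continuous R N).
exact: Re_pi_full_surj.
Qed.
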